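(* Let $p>11$ be prime, $q=p^h$, and let $\mathcal{F}: aX^n+bY^n=Z^n$ with $a,b\in\mathbb{F}_q$, $ab\neq0$, $n>3$, be an irreducible Fermat curve over $\mathbb{F}_q$. If $n=\frac{p^h-1}{3(p^r-1)}$ for a positive integer $r$ and $a^3,b^3\in\mathbb{F}_{p^r}$, then $N_q(\mathcal{F})=3n+n^2(p^r-2)$ if $p^r\equiv1\pmod3$, and $N_q(\mathcal{F})=3n+n^2p^r$ otherwise.
   Context: $N_q(\mathcal{F})$ denotes the number of $\mathbb{F}_q$-rational points of $\mathcal{F}$. *)

From HB Require Import structures.
From mathcomp Require Import all_boot all_order all_algebra all_field.
Set Implicit Arguments. Unset Strict Implicit. Unset Printing Implicit Defensive.
Import GRing.Theory.
Local Open Scope ring_scope.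

(* Canonical representative of a point of P^2(F): the first nonzero
   coordinate equals 1 (and the triple is nonzero). *)
Definition proj_normalized (F : fieldType) (t : F * F * F) : bool :=
  let: (x, y, z) := t in
  if x != 0 then x == 1 else if y != 0 then y == 1 else z == 1.

Definition fermat_Nq (F : finFieldType) (a b : F) (n : nat) : nat :=
  #|[set t : F * F * F | proj_normalized t &&
       (a * t.1.1 ^+ n + b * t.1.2 ^+ n == t.2 ^+ n)]|.

(* membership in the subfield F_{p^m} of F (fixed field of x |-> x^(p^m)) *)
Definition in_subfield (F : finFieldType) (p m : nat) (x : F) : bool :=
  x ^+ (p ^ m) == x.

From HB Require Import structures.
From mathcomp Require Import all_boot all_order all_algebra all_field.
From mathcomp Require Import ring zify.
Set Implicit Arguments. Unset Strict Implicit. Unset Printing Implicit Defensive.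

(* Points with x = 0 are the n solutions of z^n = b.  The points (1 : y : z)
   are counted by grouping y according to w = y^n: with m = (q - 1) / n, a
   nonzero c has exactly n n-th roots iff c^m = 1, and the substitution
   w = -(a/b) s turns the count into 3n + n^2 #{s | s^m = (1 - s)^m = 1}.
   For m = 3(p^r - 1) these s are those with s^3 and (1 - s)^3 in F_{p^r};
   then s^2 - s is in F_{p^r} as well, which forces s in F_{p^r} \ {0, 1}
   or s^2 - s + 1 = 0, and the two roots of the latter already lie in
   F_{p^r} exactly when p^r = 1 (mod 3). *)

Import GRing.Theory.
Local Open Scope ring_scope.

Section RootsOfConstants.
Variable F : finFieldType.

Lemma card_rootsXn_le (d : nat) (c : F) :
  (0 < d)%N -> (#|[set x : F | x ^+ d == c]| <= d)%N.
Proof.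
move=> d_gt0; have Xd_c_neq0 : ('X^d - c%:P : {poly F}) != 0.
  by rewrite -size_poly_eq0 size_XnsubC.
have := max_poly_roots Xd_c_neq0 (rs := enum [set x : F | x ^+ d == c]).
rewrite size_XnsubC // ltnS cardE; apply; last exact: enum_uniq.
by apply/allP => x; rewrite mem_enum inE rootE !hornerE subr_eq0.
Qed.

Lemma card_pred_gt0 : (0 < #|F|.-1)%N.
Proof. by rewrite -subn1 subn_gt0 finNzRing_gt1. Qed.

Lemma expf_card_pred (x : F) : x != 0 -> x ^+ #|F|.-1 = 1.
Proof.
move=> x_neq0; apply: (mulIf x_neq0).
by rewrite mul1r -exprSr prednK ?expf_card // (ltn_trans _ (finNzRing_gt1 F)).
Qed.

(* The map x |-> x^d sends the #|F|.-1 nonzero elements into the at most e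
   e-th roots of unity with fibres of size at most d, so all bounds are tight. *)
Lemma card_rootsXn (d e : nat) (c : F) :
  (d * e = #|F|.-1)%N -> c ^+ e = 1 -> #|[set x : F | x ^+ d == c]| = d.
Proof.
move=> de ce1; have /andP[d_gt0 e_gt0] : (0 < d)%N && (0 < e)%N.
  by rewrite -muln_gt0 de card_pred_gt0.
set S := [set u : F | u ^+ e == 1].
pose N u := #|[set x : F | x ^+ d == u]|.
have sum_fibres : #|F|.-1 = (\sum_(u in S) N u)%N.
  rewrite -(cardC1 (0 : F)) -sum1_card (partition_big (fun x => x ^+ d) (mem S)).
    apply: eq_bigr => u; rewrite inE => ue1; rewrite sum1_card.
    apply: eq_card => x; rewrite unfold_in /= !inE.
    have [->|//] := eqVneq x 0; rewrite expr0n (gtn_eqF d_gt0) /=.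
    apply/esym/negbTE; apply: contraTneq ue1 => <-.
    by rewrite inE expr0n (gtn_eqF e_gt0) eq_sym oner_eq0.
  by move=> x; rewrite !inE => x_neq0; rewrite -exprM de expf_card_pred.
have S_le : (#|S| <= e)%N by exact: card_rootsXn_le.
have sum_le : (\sum_(u in S) N u <= #|S| * d)%N.
  by rewrite -sum_nat_const; apply: leq_sum => u _; apply: card_rootsXn_le.
have cardS : #|S| = e.
  apply/eqP; rewrite eqn_leq S_le -(leq_pmul2r d_gt0) mulnC de sum_fibres.
  exact: sum_le.
have cS : c \in S by rewrite inE ce1.
apply/eqP; rewrite eqn_leq card_rootsXn_le //= leqNgt; apply/negP => Nc_lt.
have : (\sum_(u in S) N u < \sum_(u in S) d)%N.
  rewrite (bigD1 c) //= [X in (_ < X)%N](bigD1 c) //= -addSn.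
  by apply: leq_add => //; apply: leq_sum => u _; apply: card_rootsXn_le.
by rewrite sum_nat_const cardS -sum_fibres -de mulnC ltnn.
Qed.

Lemma card_rootsXnE (d e : nat) (c : F) : (0 < d)%N -> (d * e = #|F|.-1)%N ->
  #|[set x : F | x ^+ d == c]| = ((c == 0%R) + d * (c ^+ e == 1%R))%N.
Proof.
move=> d_gt0 de; have e_gt0 : (0 < e)%N.
  by move: card_pred_gt0; rewrite -de muln_gt0 => /andP[].
have [->|c_neq0] := eqVneq c 0.
  rewrite expr0n (gtn_eqF e_gt0) eq_sym oner_eq0 muln0 -[RHS]/1%N -(cards1 (0 : F)).
  by apply: eq_card => x; rewrite !inE expf_eq0 d_gt0.
have [ce1|ce_neq1] := eqVneq (c ^+ e) 1; first by rewrite (card_rootsXn de ce1) muln1.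
rewrite muln0; apply/eqP; rewrite cards_eq0; apply/eqP/setP => x; rewrite !inE.
apply/negbTE/eqP => xd_c; move/eqP: ce_neq1; apply.
have x_neq0 : x != 0.
  by apply: contra_neq c_neq0 => x0; rewrite -xd_c x0 expr0n (gtn_eqF d_gt0).
by rewrite -xd_c -exprM de expf_card_pred.
Qed.

Lemma card_sixth_roots (e : nat) : (3 * e = #|F|.-1)%N -> (-1 : F) ^+ e = 1 ->
  (3%:R : F) != 0 -> #|[set s : F | s ^+ 2 - s + 1 == 0]| = 2.
Proof.
move=> card_F sign_e three_neq0.
have -> : [set s : F | s ^+ 2 - s + 1 == 0] = [set s : F | s ^+ 3 == -1] :\ -1.
  apply/setP => s; rewrite in_setD1 !in_set.
  have -> : (s ^+ 3 == -1) = ((s + 1) * (s ^+ 2 - s + 1) == 0).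
    by rewrite -addr_eq0; congr (_ == _); ring.
  have [->|s_neqN1] /= := eqVneq s (-1).
    apply/negbTE; apply: contra three_neq0 => /eqP root_N1.
    by rewrite -root_N1; apply/eqP; ring.
  by rewrite mulf_eq0 (addr_eq0 s 1) (negbTE s_neqN1).
have := cardsD1 (-1 : F) [set s : F | s ^+ 3 == -1].
rewrite (card_rootsXn card_F sign_e) inE -signr_odd eqxx /=.
by move=> /eqP; rewrite eqSS => /eqP <-.
Qed.

End RootsOfConstants.

Definition complementary_unity_roots (F : finFieldType) (m : nat) : {set F} :=
  [set s | (s ^+ m == 1) && ((1 - s) ^+ m == 1)].

Lemma cube_of_sixth_root (R : comPzRingType) (s : R) :
  s ^+ 2 - s + 1 = 0 -> s ^+ 3 = -1.
Proof.
move=> s_root; apply/eqP; rewrite -subr_eq0 opprK.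
have -> : s ^+ 3 + 1 = (s + 1) * (s ^+ 2 - s + 1) by ring.
by rewrite s_root mulr0.
Qed.

Section PrimePowerExponent.
Variables (F : finFieldType) (p k : nat).
Hypotheses (charFp : p \in [pchar F]) (k_gt0 : (0 < k)%N).
Local Notation q := (p ^ k)%N.

Lemma prime_power_gt1 : (1 < q)%N.
Proof. by rewrite -(expn0 p) ltn_exp2l // prime_gt1 // (pcharf_prime charFp). Qed.

Lemma exprqD (x y : F) : (x + y) ^+ q = x ^+ q + y ^+ q.
Proof.
apply: exprDn_pchar; rewrite (eq_pnat _ (pcharf_eq charFp)) pnatX pnat_id //.
exact: pcharf_prime charFp.
Qed.

Lemma exprqN (x : F) : (- x) ^+ q = - x ^+ q.
Proof.
apply/eqP; rewrite -addr_eq0 -exprqD addNr expr0n.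
by rewrite gtn_eqF // ltnW // prime_power_gt1.
Qed.

Lemma exprqB (x y : F) : (x - y) ^+ q = x ^+ q - y ^+ q.
Proof. by rewrite exprqD exprqN. Qed.

Lemma exprq_nat (j : nat) : (j%:R : F) ^+ q = j%:R.
Proof.
elim: j => [|j IHj]; first by rewrite expr0n gtn_eqF // ltnW // prime_power_gt1.
by rewrite -nat1r exprqD IHj expr1n.
Qed.

Lemma exprq_pred_eq1 (x : F) : x != 0 -> (x ^+ (q - 1) == 1) = (x ^+ q == x).
Proof.
move=> x_neq0; have -> : q = (q - 1).+1 by rewrite subn1 prednK // ltnW // prime_power_gt1.
by rewrite exprSr -[X in _ * _ == X]mul1r (inj_eq (mulIf x_neq0)) subSS subn0.
Qed.

Lemma signr_q_pred : (-1 : F) ^+ (q - 1) = 1.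
Proof. by apply/eqP; rewrite exprq_pred_eq1 ?oppr_eq0 ?oner_eq0 // exprqN expr1n. Qed.

Hypothesis three_neq0 : (3%:R : F) != 0.

(* If s^3 and (1-s)^3 lie in F_q, so does s^2 - s = ((1-s)^3 + s^3 - 1) / 3,
   and then s = (s^3 - e) / (1 + e) with e = s^2 - s, unless 1 + e = 0. *)
Lemma cubes_in_prime_power_field (s : F) :
  (s ^+ (3 * (q - 1)) == 1) && ((1 - s) ^+ (3 * (q - 1)) == 1) =
  (s ^+ (q - 1) == 1) && (s != 1) || (s ^+ 2 - s + 1 == 0).
Proof.
have m_gt0 : (0 < 3 * (q - 1))%N by rewrite muln_gt0 subn_gt0 prime_power_gt1.
have cube_fixed (x : F) :
    (x ^+ (3 * (q - 1)) == 1) = (x != 0) && ((x ^+ 3) ^+ q == x ^+ 3).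
  have [->|x_neq0] := eqVneq x 0; first by rewrite expr0n gtn_eqF //= eq_sym oner_eq0.
  by rewrite -exprq_pred_eq1 ?expf_neq0 // exprM.
apply/idP/idP => [/andP[]|].
  rewrite !cube_fixed subr_eq0.
  move=> /andP[s_neq0 /eqP c_fixed] /andP[s_neq1 /eqP d_fixed].
  set e := s ^+ 2 - s.
  have e_fixed : e ^+ q = e.
    have -> : e = ((1 - s) ^+ 3 - 1 + s ^+ 3) / 3%:R.
      by apply: (mulIf three_neq0); rewrite mulfVK // /e; ring.
    by rewrite exprMn exprVn exprq_nat !exprqD exprqN c_fixed d_fixed expr1n.
  have [e1_eq0|e1_neq0] := eqVneq (1 + e) 0.
    by rewrite -e1_eq0 /e addrC eqxx orbT.
  have s_fixed : s ^+ q = s.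
    have -> : s = (s ^+ 3 - e) / (1 + e).
      by apply: (mulIf e1_neq0); rewrite mulfVK // /e; ring.
    by rewrite exprMn exprVn (exprqB _ e) (exprqD 1 e) c_fixed e_fixed expr1n.
  by rewrite exprq_pred_eq1 // s_fixed eqxx eq_sym s_neq1.
case/orP => [/andP[/eqP s_unit s_neq1]|/eqP s_root].
  have s_neq0 : s != 0.
    apply: contra_eq_neq s_unit => ->.
    by rewrite expr0n gtn_eqF ?subn_gt0 ?prime_power_gt1 // eq_sym oner_eq0.
  have s_fixed : s ^+ q = s by apply/eqP; rewrite -exprq_pred_eq1 // s_unit.
  have t_unit : (1 - s) ^+ (q - 1) = 1.
    by apply/eqP; rewrite exprq_pred_eq1 ?subr_eq0 1?eq_sym // exprqB expr1n s_fixed.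
  by rewrite mulnC !exprM s_unit t_unit !expr1n eqxx.
have d_root : (1 - s) ^+ 2 - (1 - s) + 1 = 0 by rewrite -s_root; ring.
by rewrite !exprM !cube_of_sixth_root // signr_q_pred eqxx.
Qed.

Lemma prime_power_mod3_neq0 : (q %% 3 != 0)%N.
Proof.
apply: contra three_neq0 => three_dvd_q; have p_prime := pcharf_prime charFp.
move: three_dvd_q; rewrite -/(dvdn 3 q) Euclid_dvdX // k_gt0 andbT dvdn_prime2 //.
by rewrite -(dvdn_pcharf charFp) => /eqP ->; rewrite dvdnn.
Qed.

Variable n : nat.
Hypothesis card_F : (n * (3 * (q - 1)) = #|F|.-1)%N.

Lemma card_complementary_unity_roots :
  #|complementary_unity_roots F (3 * (q - 1))| =
  if (q %% 3 == 1)%N then (q - 2)%N else q.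
Proof.
have q_gt1 := prime_power_gt1.
set A := [set s : F | s ^+ (q - 1) == 1] :\ 1.
set R := [set s : F | s ^+ 2 - s + 1 == 0].
have -> : complementary_unity_roots F (3 * (q - 1)) = A :|: R.
  apply/setP => s.
  by rewrite in_setU in_setD1 !in_set cubes_in_prime_power_field andbC.
have cardA : #|A| = (q - 2)%N.
  have card_F' : ((q - 1) * (3 * n) = #|F|.-1)%N by rewrite -card_F; ring.
  have := cardsD1 1 [set s : F | s ^+ (q - 1) == 1].
  rewrite (card_rootsXn card_F' (expr1n _ _)) in_set expr1n eqxx /= -/A.
  by move=> card_units; rewrite -[2%N]/(1 + 1)%N subnDA card_units addKn.
have cardR : #|R| = 2.
  apply: (@card_sixth_roots _ (n * (q - 1))); last exact: three_neq0.
    by rewrite -card_F; ring.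
  by rewrite mulnC exprM signr_q_pred expr1n.
have one_notin_R : 1 \notin R by rewrite in_set expr1n subrr add0r oner_eq0.
have [j q_pred] : exists j, (q - 1)%N = (3 * j + (q %% 3 != 1%N))%N.
  exists ((q - 1) %/ 3)%N; move: prime_power_mod3_neq0.
  by case: (q %% 3 == 1)%N /eqP; lia.
case: eqP q_pred => [_|_] /= q_pred.
  suff /setUidPl -> : R \subset A by [].
  apply/subsetP => s s_root; rewrite in_setD1 in_set (memPn one_notin_R) //=.
  move: s_root (signr_q_pred); rewrite in_set => /eqP/cube_of_sixth_root s3.
  by rewrite q_pred addn0 !exprM s3 exprS sqrrN expr1n mulr1 => ->.
rewrite cardsU cardA cardR.
suff -> : A :&: R = set0 by rewrite cards0; lia.
apply/setP => s; rewrite !in_set; apply/negbTE/negP.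
case/andP => /andP[_ /eqP s_unit] /eqP s_root.
have s_sq : s ^+ 2 = 1.
  move: s_unit; rewrite q_pred addn1 exprS mulrC exprM cube_of_sixth_root //.
  move=> sign_s; have : ((-1) ^+ j * s) ^+ 2 = 1 by rewrite sign_s expr1n.
  by rewrite exprMn sqrr_sign mul1r.
move/eqP: three_neq0; apply.
have -> : 3%:R = (s + 2%:R) * (s ^+ 2 - s + 1) - (s + 1) * (s ^+ 2 - 1) :> F by ring.
by rewrite s_root s_sq subrr !mulr0 subrr.
Qed.

End PrimePowerExponent.

Lemma sum_nat_of_bool (T : finType) (P : pred T) :
  (\sum_(x : T) (P x : nat) = #|[set x | P x]|)%N.
Proof. by rewrite -sum1dep_card [RHS]big_mkcond; apply: eq_bigr => x _; case: (P x). Qed.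

Lemma card_set_triple (T : finType) (Q : T -> T -> T -> bool) :
  #|[set t : T * T * T | Q t.1.1 t.1.2 t.2]| =
  (\sum_(x : T) \sum_(y : T) #|[set z : T | Q x y z]|)%N.
Proof.
under [RHS]eq_bigr do under eq_bigr do rewrite -sum1dep_card.
rewrite pair_bigA (pair_big_dep xpredT (fun xy z => Q xy.1 xy.2 z)) -sum1dep_card.
exact: eq_bigl.
Qed.

Lemma fermat_Nq_split (F : finFieldType) (a b : F) (n : nat) : (0 < n)%N ->
  fermat_Nq a b n = (#|[set z : F | z ^+ n == b]| +
                     \sum_(y : F) #|[set z : F | z ^+ n == (a + b * y ^+ n)%R]|)%N.
Proof.
move=> n_gt0; have zero_n : (0 : F) ^+ n = 0 by rewrite expr0n gtn_eqF.
pose on_curve x y z :=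
  proj_normalized (x, y, z) && (a * x ^+ n + b * y ^+ n == z ^+ n).
have -> : fermat_Nq a b n = #|[set t | on_curve t.1.1 t.1.2 t.2]|.
  by apply: eq_card => -[[x y] z]; rewrite !inE.
rewrite card_set_triple /on_curve.
rewrite [LHS](bigD1 0) //= [X in (_ + X)%N = _](bigD1 1) ?oner_neq0 //=.
rewrite [X in (_ + (_ + X))%N = _]big1 ?addn0 => [|x /andP[x_neq0 x_neq1]]; last first.
  apply: big1 => y _; apply/eqP; rewrite cards_eq0; apply/eqP/setP => z.
  by rewrite !inE x_neq0 (negbTE x_neq1).
congr (_ + _)%N; last first.
  apply: eq_bigr => y _; apply: eq_card => z.
  by rewrite !inE eqxx expr1n mulr1 eq_sym.
rewrite (bigD1 1) ?oner_neq0 //= big1 ?addn0 => [|y y_neq1].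
  apply: eq_card => z.
  by rewrite !inE !eqxx zero_n mulr0 add0r expr1n mulr1 eq_sym.
apply/eqP; rewrite cards_eq0; apply/eqP/setP => z; rewrite !inE eqxx.
have [-> /=|y_neq0] := eqVneq y 0; last by rewrite /= (negbTE y_neq1).
by case: eqP => //= ->; rewrite zero_n expr1n !mulr0 addr0 eq_sym oner_eq0.
Qed.

Lemma sum_comp_exprn (F : finFieldType) (n : nat) (f : F -> nat) :
  (\sum_(y : F) f (y ^+ n) = \sum_(w : F) #|[set y : F | y ^+ n == w]| * f w)%N.
Proof.
rewrite (partition_big (fun y => y ^+ n) xpredT) //=; apply: eq_bigr => w _.
by rewrite -sum1dep_card big_distrl /=; apply: eq_big => [y|y /eqP ->]; rewrite ?mul1n.
Qed.

Section FermatCurvePoints.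
Variables (F : finFieldType) (a b : F) (n m : nat).
Hypotheses (card_F : (n * m = #|F|.-1)%N) (am1 : a ^+ m = 1) (bm1 : b ^+ m = 1).
Hypothesis sign_m : (-1 : F) ^+ m = 1.

Let n_gt0 : (0 < n)%N.
Proof. by move: (card_pred_gt0 F); rewrite -card_F muln_gt0 => /andP[]. Qed.

Let m_gt0 : (0 < m)%N.
Proof. by move: (card_pred_gt0 F); rewrite -card_F muln_gt0 => /andP[]. Qed.

Let unit_neq0 (c : F) : c ^+ m = 1 -> c != 0.
Proof. by apply: contra_eq_neq => ->; rewrite expr0n gtn_eqF //= eq_sym oner_neq0. Qed.

Let card_roots (c : F) :
  #|[set z : F | z ^+ n == c]| = ((c == 0%R) + n * (c ^+ m == 1%R))%N.
Proof. exact: card_rootsXnE. Qed.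

Lemma sum_card_roots_affine :
  (\sum_(y : F) #|[set z : F | z ^+ n == (a + b * y ^+ n)%R]| =
   2 * n + n ^ 2 * #|complementary_unity_roots F m|)%N.
Proof.
pose k := - (a / b).
have km1 : k ^+ m = 1.
  by rewrite /k -mulN1r !exprMn sign_m am1 exprVn bm1 invr1 !mul1r.
have k_root : a + b * k = 0 by rewrite /k mulrN mulrC divfK ?subrr ?unit_neq0.
rewrite (sum_comp_exprn n (fun w => #|[set z : F | z ^+ n == (a + b * w)%R]|)) /=.
under eq_bigr => w _ do rewrite !card_roots.
have k_neq0 : k != 0 by rewrite unit_neq0.
rewrite (eq_bigr (fun w : F => n * (w == 0%R) +
                   n * ((a + b * w == 0) && (w ^+ m == 1))%R +
                   n ^ 2 * ((w ^+ m == 1) && ((a + b * w) ^+ m == 1))%R)%N); last first.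
  have zero_m_neq1 : ((0 : F) ^+ m == 1) = false.
    by apply/negbTE/eqP => /unit_neq0; rewrite eqxx.
  move=> w _; have [->|w_neq0] := eqVneq w 0.
    by rewrite mulr0 addr0 am1 eqxx (negbTE (unit_neq0 am1)) zero_m_neq1 /=; lia.
  have [->|_] /= := eqVneq (a + b * w) 0; rewrite ?zero_m_neq1; case: (_ == 1); lia.
rewrite !big_split -!big_distrr /= !sum_nat_of_bool.
have -> : #|[set w : F | w == 0]| = 1%N.
  by rewrite -(cards1 (0 : F)); apply: eq_card => w; rewrite !inE.
have -> : #|[set w : F | (a + b * w == 0) && (w ^+ m == 1)]| = 1%N.
  rewrite -(cards1 k); apply: eq_card => w; rewrite !inE.
  have [->|w_neq_k] := eqVneq w k; first by rewrite k_root km1 !eqxx.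
  apply/negbTE; rewrite negb_and -k_root (inj_eq (addrI a)).
  by rewrite (inj_eq (mulfI (unit_neq0 bm1))) w_neq_k.
have -> : #|[set w : F | (w ^+ m == 1) && ((a + b * w) ^+ m == 1)]| =
          #|complementary_unity_roots F m|.
  rewrite -!sum_nat_of_bool (reindex_inj (mulfI k_neq0)); apply: eq_bigr => s _.
  have -> : a + b * (k * s) = a * (1 - s).
    have bk : b * k = - a by apply/eqP; rewrite -addr_eq0 addrC k_root.
    by rewrite mulrA bk; ring.
  by rewrite !exprMn km1 am1 !mul1r.
by rewrite !muln1 addnn -mul2n.
Qed.

Lemma fermat_Nq_complementary_unity_roots :
  fermat_Nq a b n = (3 * n + n ^ 2 * #|complementary_unity_roots F m|)%N.
Proof.
rewrite fermat_Nq_split // sum_card_roots_affine card_roots bm1 eqxx.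
by rewrite (negbTE (unit_neq0 bm1)) muln1 add0n addnA -mulSn.
Qed.

End FermatCurvePoints.

Local Close Scope ring_scope.

Theorem theorem5p2 (p h r n : nat) (F : finFieldType) (a b : F) :
  prime p -> 11 < p -> #|F| = p ^ h ->
  a != 0%R -> b != 0%R -> 3 < n ->
  0 < r -> (n * (3 * (p ^ r - 1)) = p ^ h - 1)%N ->
  in_subfield p r (a ^+ 3)%R -> in_subfield p r (b ^+ 3)%R ->
  fermat_Nq a b n =
    (if p ^ r %% 3 == 1 then 3 * n + n ^ 2 * (p ^ r - 2)
     else 3 * n + n ^ 2 * p ^ r)%N.
Proof.
(* The count holds for every n with n * 3(p^r - 1) = q - 1. *)
move=> p_prime p_gt11 card_F a_neq0 b_neq0 _ r_gt0 n_q_pred a3_fixed b3_fixed.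
have charFp : p \in [pchar F]%R := card_finPcharP card_F p_prime.
have three_neq0 : (3%:R : F)%R != 0%R.
  by rewrite -(dvdn_pcharf charFp); apply/negP => /dvdn_leq; lia.
have card_F_pred : n * (3 * (p ^ r - 1)) = #|F|.-1.
  by rewrite n_q_pred card_F subn1.
have cube_unit (x : F) : x != 0%R -> in_subfield p r (x ^+ 3)%R ->
    (x ^+ (3 * (p ^ r - 1)) = 1)%R.
  move=> x_neq0 /eqP x3_fixed; apply/eqP.
  by rewrite exprM (exprq_pred_eq1 charFp r_gt0) ?expf_neq0 ?x3_fixed.
have sign_unit : ((-1 : F) ^+ (3 * (p ^ r - 1)) = 1)%R.
  by rewrite mulnC exprM (signr_q_pred charFp r_gt0) expr1n.
rewrite (fermat_Nq_complementary_unity_roots card_F_pred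
           (cube_unit a a_neq0 a3_fixed) (cube_unit b b_neq0 b3_fixed) sign_unit).
rewrite (card_complementary_unity_roots charFp r_gt0 three_neq0 card_F_pred).
by case: ifP.
Qed.
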